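(* For every integer $k\ge1$, \[ \sum_{n=1}^\infty\frac{Q_{k+1}(H_n,H_n^{(2)},\dots,H_n^{(k+1)})}{(n+1)^2}+\sum_{n=1}^\infty\frac{Q_k(H_n,H_n^{(2)},\dots,H_n^{(k)})}{n^3}=(k+2)\zeta(k+3). \]
   Context: $H_n^{(r)}=\sum_{t=1}^n t^{-r}$, $H_n=H_n^{(1)}$. For $n\ge1$, $Q_n(y_1,\dots,y_n)=\sum_{m_1+2m_2+\cdots=n}\frac{1}{m_1!m_2!\cdots}\prod_{i\ge1}(y_i/i)^{m_i}$ (sum over tuples of nonnegative integers), i.e. $Q_n(p_1,\dots,p_n)=h_n$, the complete symmetric function. $\zeta$ is the Riemann zeta function. *)

From Stdlib Require Import Reals Lra Lia Arith.
Open Scope R_scope.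

Fixpoint Hr (n r : nat) : R :=
  match n with
  | O => 0
  | S m => Hr m r + / (INR (S m)) ^ r
  end.

(* Nested-sum expansion of
     Q_n(y_1,...,y_n) = sum_{m_1 + 2 m_2 + ... = n} prod_i (y_i/i)^{m_i} / m_i!.
   Qaux f j r y sums, over the multiplicities m_j, m_{j+1}, ..., m_{j+f-1}
   (remaining multiplicities forced to 0) with j m_j + (j+1) m_{j+1} + ... = r,
   the product prod (y_i/i)^{m_i}/m_i!. *)
Fixpoint Qaux (f j r : nat) (y : nat -> R) : R :=
  match r with
  | O => 1
  | S _ =>
    match f with
    | O => 0
    | S f' =>
      sum_f_R0 (fun m => (y j / INR j) ^ m / INR (fact m)
                          * Qaux f' (S j) (r - j * m)%nat y) (r / j)
    end
  end.

Definition Q (n : nat) (y : nat -> R) : R := Qaux n 1 n y.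

From Stdlib Require Import Reals Lra Lia Arith.
Open Scope R_scope.

(* Write h_k(n) for the complete homogeneous polynomial h_k(1, 1/2, ..., 1/n). Newton's
   identities give Q_k(H_n, ..., H_n^(k)) = h_k(n), and h_(k+1)(n) = h_(k+1)(n-1) + h_k(n)/n
   turns the left-hand side into sum_(n>=1) h_(k+1)(n)/n^2 up to a vanishing boundary term,
   so it suffices that sum_(n>=1) h_k(n)/n^2 = (k+1) zeta(k+2).
   Now h_k(n) = n! [x^k] P_(0,n)(x) with P_(J,m)(x) = prod_(i=1..m) 1/(J+i-x), and
   m P_(J,m+1) = P_(J,m) - P_(J+1,m). Summed over n, this telescopes the shift J -> J+1 and
   writes the series as sum_J sum_n n! P_(J,n+2)(x); the inner sum is
   (1/(J+1-x) - N! P_(J,N+1)(x)) / (J+1-x), whose x^k-coefficient tends to (k+1)/(J+1)^(k+2)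
   because N! [x^i] P_(J,N+1) <= h_i(N+1)/(N+1) -> 0. *)

Fixpoint rsum (n : nat) (f : nat -> R) : R :=
  match n with O => 0 | S n' => rsum n' f + f n' end.

Lemma rsum_ext n f g : (forall i, (i < n)%nat -> f i = g i) -> rsum n f = rsum n g.
Proof.
  induction n as [|n IH]; simpl; intros H; [reflexivity|].
  rewrite IH by (intros; apply H; lia). rewrite H by lia. reflexivity.
Qed.

Lemma rsum_plus n f g : rsum n (fun i => f i + g i) = rsum n f + rsum n g.
Proof. induction n; simpl; [lra|]. rewrite IHn. lra. Qed.

Lemma rsum_minus n f g : rsum n (fun i => f i - g i) = rsum n f - rsum n g.
Proof. induction n; simpl; [lra|]. rewrite IHn. lra. Qed.

Lemma rsum_scal n c f : rsum n (fun i => c * f i) = c * rsum n f.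
Proof. induction n; simpl; [lra|]. rewrite IHn. lra. Qed.

Lemma rsum_shift n f : rsum (S n) f = f O + rsum n (fun i => f (S i)).
Proof. induction n; simpl in *; [lra|]. rewrite IHn. lra. Qed.

Lemma rsum_add a b f : rsum (a + b) f = rsum a f + rsum b (fun i => f (a + i)%nat).
Proof.
  induction b; simpl; [rewrite Nat.add_0_r; lra|].
  rewrite Nat.add_succ_r. simpl. rewrite IHb. lra.
Qed.

Lemma rsum_le n f g : (forall i, (i < n)%nat -> f i <= g i) -> rsum n f <= rsum n g.
Proof.
  induction n; simpl; intros H; [lra|].
  assert (rsum n f <= rsum n g) by (apply IHn; intros; apply H; lia).
  assert (f n <= g n) by (apply H; lia). lra.
Qed.

Lemma rsum_zero n f : (forall i, (i < n)%nat -> f i = 0) -> rsum n f = 0.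
Proof.
  induction n; simpl; intros H; [lra|].
  rewrite IHn by (intros; apply H; lia). rewrite H by lia. lra.
Qed.

Lemma rsum_nonneg n f : (forall i, (i < n)%nat -> 0 <= f i) -> 0 <= rsum n f.
Proof.
  intros H. rewrite <- (rsum_zero n (fun _ => 0)) by reflexivity. now apply rsum_le.
Qed.

Lemma rsum_swap n m f :
  rsum n (fun i => rsum m (fun j => f i j)) = rsum m (fun j => rsum n (fun i => f i j)).
Proof.
  induction n; simpl.
  - symmetry; now apply rsum_zero.
  - rewrite IHn, <- rsum_plus. reflexivity.
Qed.

Lemma rsum_telescope n u : rsum n (fun i => u i - u (S i)) = u O - u n.
Proof. induction n; simpl; [lra|]. rewrite IHn. lra. Qed.

Lemma rsum_ge_const n f c : (forall i, (i < n)%nat -> c <= f i) -> INR n * c <= rsum n f.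
Proof.
  intros H. replace (INR n * c) with (rsum n (fun _ => c)).
  - now apply rsum_le.
  - clear H. induction n as [|n IH]; simpl rsum; [simpl; ring|]. rewrite IH, S_INR. ring.
Qed.

Lemma rsum_succ_le n f : 0 <= f n -> rsum n f <= rsum (S n) f.
Proof. simpl. lra. Qed.

Lemma sum_f_R0_rsum f N : sum_f_R0 f N = rsum (S N) f.
Proof. induction N; simpl; [lra|]. rewrite IHN. reflexivity. Qed.

Section Newton.

Variable y : nat -> R.

Definition Qterm (j m : nat) : R := (y j / INR j) ^ m / INR (fact m).

Lemma Qterm_succ j m : (1 <= j)%nat -> Qterm j (S m) * INR (j * S m) = y j * Qterm j m.
Proof.
  intros Hj. unfold Qterm. rewrite mult_INR, fact_simpl, mult_INR, <- tech_pow_Rmult.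
  assert (INR j <> 0) by (apply not_0_INR; lia).
  assert (INR (S m) <> 0) by (apply not_0_INR; lia).
  assert (INR (fact m) <> 0) by apply INR_fact_neq_0.
  field. auto.
Qed.

Lemma Qaux_nil f j : Qaux f j 0 y = 1.
Proof. destruct f; reflexivity. Qed.

Lemma Qaux_succ f j r : (1 <= j)%nat ->
  Qaux (S f) j r y = sum_f_R0 (fun m => Qterm j m * Qaux f (S j) (r - j * m) y) (r / j).
Proof.
  intros Hj. destruct r; [|reflexivity].
  rewrite Nat.Div0.div_0_l, Qaux_nil. simpl. unfold Qterm. rewrite Qaux_nil. simpl. field.
Qed.

(* The cut-off [j * m <=? r] lets the range of multiplicities be padded to any bound [B >= r]. *)
Lemma Qaux_succ_rsum f j r B : (1 <= j)%nat -> (r <= B)%nat ->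
  Qaux (S f) j r y =
  rsum (S B) (fun m => if (j * m <=? r)%nat then Qterm j m * Qaux f (S j) (r - j * m) y else 0).
Proof.
  intros Hj HB. rewrite Qaux_succ, sum_f_R0_rsum by exact Hj.
  assert (Hdiv : (r / j <= r)%nat) by (apply Nat.Div0.div_le_upper_bound; nia).
  replace (S B) with (S (r / j) + (B - r / j))%nat by lia.
  rewrite rsum_add, (rsum_zero (B - r / j)), Rplus_0_r.
  - apply rsum_ext. intros m Hm.
    assert (j * m <= j * (r / j))%nat by (apply Nat.mul_le_mono_l; lia).
    pose proof (Nat.Div0.mul_div_le r j).
    destruct (Nat.leb_spec (j * m) r); [reflexivity|lia].
  - intros m _. pose proof (Nat.mul_succ_div_gt r j ltac:(lia)).
    assert (j * S (r / j) <= j * (S (r / j) + m))%nat by (apply Nat.mul_le_mono_l; lia).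
    destruct (Nat.leb_spec (j * (S (r / j) + m)) r); [lia|reflexivity].
Qed.

Lemma Qaux_newton_head f j r : (1 <= j)%nat ->
  rsum (S r) (fun m => if (j * m <=? r)%nat
                       then Qterm j m * INR (j * m) * Qaux f (S j) (r - j * m) y else 0)
  = if (j <=? r)%nat then y j * Qaux (S f) j (r - j) y else 0.
Proof.
  intros Hj. rewrite rsum_shift, Nat.mul_0_r, Rmult_0_r, Rmult_0_l.
  destruct (Nat.leb_spec 0 r); [|lia]. rewrite Rplus_0_l.
  destruct (Nat.leb_spec j r) as [Hjr|Hjr].
  - destruct r as [|r]; [lia|].
    rewrite (Qaux_succ_rsum f j (S r - j) r), <- rsum_scal by lia.
    apply rsum_ext. intros m _.
    destruct (Nat.leb_spec (j * S m) (S r)), (Nat.leb_spec (j * m) (S r - j)); try lia.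
    + rewrite Qterm_succ by exact Hj.
      replace (S r - j * S m)%nat with (S r - j - j * m)%nat by lia. ring.
    + ring.
  - apply rsum_zero. intros m _. rewrite Nat.mul_succ_r.
    destruct (Nat.leb_spec (j * m + j) r); [lia|reflexivity].
Qed.

(* Newton's identity [r h_r = sum_i p_i h_(r-i)], restricted to the parts [j, ..., j+f-1]. *)
Lemma Qaux_newton f : forall j r, (1 <= j)%nat ->
  INR r * Qaux f j r y =
  rsum f (fun i => if (j + i <=? r)%nat then y (j + i)%nat * Qaux f j (r - (j + i)) y else 0).
Proof.
  induction f as [|f IH]; intros j r Hj.
  - destruct r; simpl; ring.
  - rewrite (Qaux_succ_rsum f j r r), <- rsum_scal by lia.
    transitivity
      (rsum (S r) (fun m => if (j * m <=? r)%nat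
                  then Qterm j m * INR (j * m) * Qaux f (S j) (r - j * m) y else 0)
     + rsum (S r) (fun m => if (j * m <=? r)%nat
                  then Qterm j m * (INR (r - j * m) * Qaux f (S j) (r - j * m) y) else 0)).
    { rewrite <- rsum_plus. apply rsum_ext. intros m _.
      destruct (Nat.leb_spec (j * m) r); [|ring].
      rewrite <- (Nat.sub_add (j * m) r), plus_INR, Nat.add_sub by exact H. ring. }
    rewrite Qaux_newton_head, (rsum_shift f), Nat.add_0_r by exact Hj. f_equal.
    transitivity (rsum (S r) (fun m => rsum f (fun i =>
        if andb (j * m <=? r)%nat (S j + i <=? r - j * m)%nat
        then Qterm j m * (y (S j + i)%nat * Qaux f (S j) (r - j * m - (S j + i)) y) else 0))).
    { apply rsum_ext. intros m _. destruct (j * m <=? r)%nat; cbn [andb].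
      - rewrite IH, <- rsum_scal by lia. apply rsum_ext. intros i _.
        destruct (S j + i <=? r - j * m)%nat; ring.
      - symmetry. now apply rsum_zero. }
    rewrite rsum_swap. apply rsum_ext. intros i _.
    replace (j + S i)%nat with (S j + i)%nat by lia.
    destruct (Nat.leb_spec (S j + i) r).
    + rewrite (Qaux_succ_rsum f j (r - (S j + i)) r), <- rsum_scal by lia.
      apply rsum_ext. intros m _.
      destruct (Nat.leb_spec (j * m) r), (Nat.leb_spec (S j + i) (r - j * m)),
        (Nat.leb_spec (j * m) (r - (S j + i))); cbn [andb]; try lia; try ring.
      replace (r - j * m - (S j + i))%nat with (r - (S j + i) - j * m)%nat by lia. ring.
    + apply rsum_zero. intros m _.
      destruct (Nat.leb_spec (j * m) r), (Nat.leb_spec (S j + i) (r - j * m)); cbn [andb];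
        try lia; reflexivity.
Qed.

Lemma Qaux_unused_part f j r : (1 <= j)%nat -> (r < j + f)%nat ->
  Qaux (S f) j r y = Qaux f j r y.
Proof.
  revert j r. induction f as [|f IH]; intros j r Hj Hr.
  - destruct r; [now rewrite !Qaux_nil|].
    rewrite Qaux_succ, Nat.div_small by lia. simpl.
    rewrite Nat.mul_0_r. simpl. ring.
  - rewrite (Qaux_succ (S f)), (Qaux_succ f) by exact Hj.
    apply sum_eq. intros m _. rewrite IH by lia. reflexivity.
Qed.

Lemma Qaux_extra_parts r d j : (1 <= j)%nat -> Qaux (r + d) j r y = Qaux r j r y.
Proof.
  intros Hj. induction d; [now rewrite Nat.add_0_r|].
  rewrite Nat.add_succ_r, Qaux_unused_part by lia. exact IHd.
Qed.

Lemma Q_newton k : INR (S k) * Q (S k) y = rsum (S k) (fun i => y (S i) * Q (k - i) y).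
Proof.
  unfold Q. rewrite Qaux_newton by lia. apply rsum_ext. intros i Hi.
  destruct (Nat.leb_spec (1 + i) (S k)); [|lia].
  replace (S k - (1 + i))%nat with (k - i)%nat by lia.
  rewrite <- (Qaux_extra_parts (k - i) (S i) 1) by lia.
  replace (k - i + S i)%nat with (S k) by lia. reflexivity.
Qed.

End Newton.

(* [hharm n k] is the complete homogeneous symmetric polynomial h_k(1, 1/2, ..., 1/n). *)
Fixpoint hharm (n : nat) : nat -> R :=
  match n with
  | O => fun k => match k with O => 1 | S _ => 0 end
  | S n' => fix hn (k : nat) : R :=
      match k with
      | O => 1
      | S k' => hharm n' (S k') + hn k' / INR (S n')
      end
  end.

Lemma hharm_succ n k : hharm (S n) (S k) = hharm n (S k) + hharm (S n) k / INR (S n).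
Proof. reflexivity. Qed.

Lemma hharm_0 n : hharm n 0 = 1.
Proof. destruct n; reflexivity. Qed.

Definition conv (q b : nat -> R) (k : nat) : R := rsum (S k) (fun j => q j * b (k - j)%nat).

Lemma conv_plus q1 q2 b k : conv (fun j => q1 j + q2 j) b k = conv q1 b k + conv q2 b k.
Proof. unfold conv. rewrite <- rsum_plus. apply rsum_ext. intros; ring. Qed.

Lemma conv_hharm_succ q n k :
  conv q (hharm (S n)) (S k) = conv q (hharm n) (S k) + / INR (S n) * conv q (hharm (S n)) k.
Proof.
  unfold conv. change (rsum (S (S k)) ?f) with (rsum (S k) f + f (S k)). cbv beta.
  rewrite Nat.sub_diag, !hharm_0, <- rsum_scal.
  rewrite (rsum_ext (S k) _ (fun j =>
    q j * hharm n (S k - j) + / INR (S n) * (q j * hharm (S n) (k - j)))).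
  - rewrite rsum_plus. ring.
  - intros j Hj. replace (S k - j)%nat with (S (k - j)) by lia.
    rewrite hharm_succ. unfold Rdiv. ring.
Qed.

Lemma conv_geometric a b k : a <> 0 ->
  conv (fun j => / a ^ S j) b (S k) = / a * b (S k) + / a * conv (fun j => / a ^ S j) b k.
Proof.
  intros Ha. unfold conv. rewrite rsum_shift, Nat.sub_0_r, pow_1, <- rsum_scal.
  f_equal. apply rsum_ext. intros j _. simpl (S k - S j)%nat.
  rewrite <- (tech_pow_Rmult _ (S j)), Rinv_mult. ring.
Qed.

Lemma hharm_newton n k : INR (S k) * hharm n (S k) = conv (fun j => Hr n (S j)) (hharm n) k.
Proof.
  revert k. induction n as [|n IHn]; intros k.
  - unfold conv. rewrite rsum_zero; [simpl; ring|]. intros j _. simpl. ring.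
  - assert (Hn : INR (S n) <> 0) by (apply not_0_INR; lia).
    assert (Hsplit : forall k, conv (fun j => Hr (S n) (S j)) (hharm (S n)) k =
       conv (fun j => Hr n (S j)) (hharm (S n)) k
       + conv (fun j => / INR (S n) ^ S j) (hharm (S n)) k)
      by (intros; apply conv_plus).
    induction k as [|k IHk].
    + specialize (IHn O). rewrite Hsplit, hharm_succ, hharm_0.
      unfold conv in *. cbn [rsum Nat.sub] in *. rewrite !hharm_0, pow_1 in *.
      change (INR 1) with 1 in *. unfold Rdiv. lra.
    + rewrite Hsplit, conv_hharm_succ, conv_geometric, <- IHn by exact Hn.
      specialize (Hsplit k). rewrite <- IHk in Hsplit.
      rewrite hharm_succ, (S_INR (S k)).
      replace (conv (fun j => Hr n (S j)) (hharm (S n)) k) with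
        (INR (S k) * hharm (S n) (S k) - conv (fun j => / INR (S n) ^ S j) (hharm (S n)) k)
        by lra.
      field. exact Hn.
Qed.

Lemma Q_hharm n k : Q k (fun r => Hr n r) = hharm n k.
Proof.
  induction k as [k IH] using lt_wf_ind. destruct k.
  - unfold Q. now rewrite Qaux_nil, hharm_0.
  - apply (Rmult_eq_reg_l (INR (S k))); [|apply not_0_INR; lia].
    rewrite Q_newton, hharm_newton. apply rsum_ext. intros i Hi.
    rewrite IH by lia. reflexivity.
Qed.

Definition mulX (c : nat -> R) (k : nat) : R := match k with O => 0 | S k' => c k' end.

(* Coefficients of the power series [d(x) / (a - x)]. *)
Fixpoint divX (a : R) (d : nat -> R) (k : nat) : R :=
  match k with
  | O => d O / a
  | S k' => (d (S k') + divX a d k') / a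
  end.

Section DivX.

Variables (a : R) (d : nat -> R).

Lemma divX_spec k : a <> 0 -> a * divX a d k = d k + mulX (divX a d) k.
Proof. intros Ha. destruct k; simpl; field; exact Ha. Qed.

Lemma divX_unique (w : nat -> R) : a <> 0 ->
  (forall k, a * w k = d k + mulX w k) -> forall k, w k = divX a d k.
Proof.
  intros Ha Hw. induction k as [|k IH].
  - specialize (Hw O). simpl in *. field_simplify_eq; [lra|exact Ha].
  - specialize (Hw (S k)). simpl in *. rewrite <- IH. field_simplify_eq; [lra|exact Ha].
Qed.

Lemma divX_ext (d' : nat -> R) : (forall k, d k = d' k) -> forall k, divX a d k = divX a d' k.
Proof. intros H. induction k; simpl; rewrite H; [|rewrite IHk]; reflexivity. Qed.

Lemma divX_nonneg k : 0 < a -> (forall i, 0 <= d i) -> 0 <= divX a d k.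
Proof.
  intros Ha Hd. induction k; simpl; apply Rle_mult_inv_pos; auto.
  specialize (Hd (S k)). lra.
Qed.

(* [a c_k = d_k + c_(k-1) <= d_k + a c_(k-1)] once [a >= 1]. *)
Lemma divX_le_rsum k : 1 <= a -> (forall i, 0 <= d i) -> a * divX a d k <= rsum (S k) d.
Proof.
  intros Ha Hd. induction k as [|k IH].
  - simpl. unfold Rdiv. rewrite Rmult_comm, Rmult_assoc, Rinv_l by lra. lra.
  - rewrite divX_spec by lra. simpl mulX.
    change (rsum (S (S k)) d) with (rsum (S k) d + d (S k)).
    assert (divX a d k <= a * divX a d k).
    { pose proof (divX_nonneg k ltac:(lra) Hd). nra. }
    lra.
Qed.

End DivX.

(* Partial fractions: [1/((a-x)(b-x)) = (1/(b-x) - 1/(a-x)) / (a-b)]. *)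
Lemma divX_partial_fractions a b d k : a <> 0 -> b <> 0 ->
  (a - b) * divX a (divX b d) k = divX b d k - divX a d k.
Proof.
  intros Ha Hb. destruct (Req_dec a b) as [<-|Hab]; [ring|].
  assert (Hab' : a - b <> 0) by lra.
  rewrite <- (divX_unique a (divX b d) (fun k => (divX b d k - divX a d k) / (a - b))); auto.
  - field. exact Hab'.
  - intros i. pose proof (divX_spec a d i Ha). pose proof (divX_spec b d i Hb).
    destruct i; simpl mulX in *; field_simplify_eq; auto; nra.
Qed.

Lemma divX_comm a b d k : a <> 0 -> b <> 0 -> divX a (divX b d) k = divX b (divX a d) k.
Proof.
  intros Ha Hb. destruct (Req_dec a b) as [<-|Hab]; [reflexivity|].
  pose proof (divX_partial_fractions a b d k Ha Hb).
  pose proof (divX_partial_fractions b a d k Hb Ha).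
  apply (Rmult_eq_reg_l (a - b)); [lra|lra].
Qed.

Lemma divX_le_divX a a' d d' k : 0 < a -> a <= a' -> (forall i, 0 <= d' i <= d i) ->
  divX a' d' k <= divX a d k.
Proof.
  intros Ha Haa' Hd.
  assert (Hdiv : forall x y, 0 <= x <= y -> x / a' <= y / a).
  { intros x y Hxy. unfold Rdiv. apply Rmult_le_compat; try lra.
    - left. apply Rinv_0_lt_compat. lra.
    - now apply Rinv_le_contravar. }
  induction k as [|k IH]; simpl; apply Hdiv; [apply Hd|].
  pose proof (divX_nonneg a' d' k ltac:(lra) (fun i => proj1 (Hd i))).
  pose proof (Hd (S k)). lra.
Qed.

Definition one_coef (k : nat) : R := match k with O => 1 | S _ => 0 end.

(* [pcoef J m k] is the coefficient of [x^k] in [prod_(i=1..m) 1/(J+i-x)]. *)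
Fixpoint pcoef (J m : nat) : nat -> R :=
  match m with
  | O => one_coef
  | S m' => divX (INR (J + S m')) (pcoef J m')
  end.

Lemma pcoef_nonneg J m k : 0 <= pcoef J m k.
Proof.
  revert k. induction m as [|m IH]; intros k.
  - destruct k; simpl; lra.
  - apply divX_nonneg; [apply lt_0_INR; lia|exact IH].
Qed.

Lemma pcoef_one J k : pcoef J 1 k = / INR (S J) ^ S k.
Proof.
  assert (HJ : INR (S J) <> 0) by (apply not_0_INR; lia).
  change (divX (INR (J + 1)) one_coef k = / INR (S J) ^ S k). rewrite Nat.add_1_r.
  induction k as [|k IH]; cbn [divX one_coef]; [rewrite pow_1; field; exact HJ|].
  rewrite IH, Rplus_0_l, <- (tech_pow_Rmult _ (S k)), Rinv_mult.
  field. split; [apply pow_nonzero|]; exact HJ.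
Qed.

Lemma pcoef_peel J m k : pcoef J (S m) k = divX (INR (S J)) (pcoef (S J) m) k.
Proof.
  revert k. induction m as [|m IH]; intros k.
  - change (divX (INR (J + 1)) one_coef k = divX (INR (S J)) one_coef k).
    now rewrite Nat.add_1_r.
  - assert (Hc : INR (J + S (S m)) <> 0) by (apply not_0_INR; lia).
    assert (HJ : INR (S J) <> 0) by (apply not_0_INR; lia).
    change (pcoef J (S (S m)) k) with (divX (INR (J + S (S m))) (pcoef J (S m)) k).
    rewrite (divX_ext _ _ _ IH), divX_comm by assumption.
    replace (J + S (S m))%nat with (S J + S m)%nat by lia. reflexivity.
Qed.

Lemma pcoef_sub J m k : INR m * pcoef J (S m) k = pcoef J m k - pcoef (S J) m k.
Proof.
  assert (Hc : INR (J + S m) <> 0) by (apply not_0_INR; lia).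
  assert (HJ : INR (S J) <> 0) by (apply not_0_INR; lia).
  pose proof (divX_spec (INR (J + S m)) (pcoef J m) k Hc) as Hlast.
  pose proof (divX_spec (INR (S J)) (pcoef (S J) m) k HJ) as Hfirst.
  replace (INR m) with (INR (J + S m) - INR (S J)) by (rewrite plus_INR, !S_INR; ring).
  destruct k; cbn [mulX] in *; rewrite <- ?pcoef_peel in Hfirst;
    change (divX (INR (J + S m)) (pcoef J m)) with (pcoef J (S m)) in *;
    rewrite Rmult_minus_distr_r, Hlast, Hfirst; ring.
Qed.

Lemma pcoef_antitone J m k : pcoef (S J) m k <= pcoef J m k.
Proof.
  revert k. induction m as [|m IH]; intros k; [apply Rle_refl|].
  apply divX_le_divX.
  - apply lt_0_INR. lia.
  - apply le_INR. lia.
  - intros i. split; [apply pcoef_nonneg|apply IH].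
Qed.

Lemma pcoef_le_pcoef0 J m k : pcoef J m k <= pcoef 0 m k.
Proof.
  induction J as [|J IH]; [apply Rle_refl|]. eapply Rle_trans; [apply pcoef_antitone|exact IH].
Qed.

Lemma pcoef_le_inv J m k : INR (S J) * pcoef J (S m) k <= rsum (S k) (pcoef 0 m).
Proof.
  rewrite pcoef_peel. eapply Rle_trans.
  - apply divX_le_rsum; [|apply pcoef_nonneg].
    rewrite S_INR. pose proof (pos_INR J). lra.
  - apply rsum_le. intros i _. apply pcoef_le_pcoef0.
Qed.

Lemma hharm_pcoef n k : hharm n k = INR (fact n) * pcoef 0 n k.
Proof.
  revert k. induction n as [|n IHn]; intros k.
  - destruct k; simpl; ring.
  - assert (Hn : INR (S n) <> 0) by (apply not_0_INR; lia).
    rewrite fact_simpl, mult_INR.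
    induction k as [|k IHk].
    + rewrite hharm_0. specialize (IHn O). rewrite hharm_0 in IHn.
      change (pcoef 0 (S n) 0) with (pcoef 0 n 0 / INR (0 + S n)).
      simpl (0 + S n)%nat. transitivity (INR (fact n) * pcoef 0 n 0); [exact IHn|].
      field. exact Hn.
    + rewrite hharm_succ, IHk, IHn.
      change (pcoef 0 (S n) (S k)) with ((pcoef 0 n (S k) + pcoef 0 (S n) k) / INR (0 + S n)).
      simpl (0 + S n)%nat. field. exact Hn.
Qed.

Definition fpcoef (n J k : nat) : R := INR (fact n) * pcoef J (S n) k.

(* [hsum N 0 k] is the partial sum [sum_(n=1..N) h_k(1, ..., 1/n) / n^2]. *)
Definition hsum (N J k : nat) : R := rsum N (fun n => fpcoef n J k / INR (S n)).

Definition hsum_diff (N J k : nat) : R := rsum N (fun n => fpcoef (S n) J k / INR (S n)).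

Lemma fpcoef_nonneg n J k : 0 <= fpcoef n J k.
Proof. apply Rmult_le_pos; [apply pos_INR|apply pcoef_nonneg]. Qed.

Lemma fpcoef_sub n J k : fpcoef n J k - fpcoef n (S J) k = fpcoef (S n) J k.
Proof.
  unfold fpcoef. rewrite fact_simpl, mult_INR.
  replace (INR (S n) * INR (fact n) * pcoef J (S (S n)) k)
    with (INR (fact n) * (INR (S n) * pcoef J (S (S n)) k)) by ring.
  rewrite pcoef_sub. ring.
Qed.

Lemma fpcoef_peel n J k :
  INR (S J) * fpcoef n J k - mulX (fun i => fpcoef n J i) k = INR (fact n) * pcoef (S J) n k.
Proof.
  assert (HJ : INR (S J) <> 0) by (apply not_0_INR; lia).
  pose proof (divX_spec (INR (S J)) (pcoef (S J) n) k HJ) as Hspec.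
  transitivity (INR (fact n) * (INR (S J) * divX (INR (S J)) (pcoef (S J) n) k
                               - mulX (divX (INR (S J)) (pcoef (S J) n)) k)).
  - unfold fpcoef. destruct k; cbn [mulX]; rewrite !pcoef_peel; ring.
  - rewrite Hspec. ring.
Qed.

Lemma hsum_diff_rec N J k :
  INR (S J) * hsum_diff N J k - mulX (fun i => hsum_diff N J i) k = fpcoef 0 J k - fpcoef N J k.
Proof.
  rewrite <- (rsum_telescope N (fun n => fpcoef n J k)).
  unfold hsum_diff. rewrite <- rsum_scal.
  assert (Hterm : forall n, (INR (S J) * fpcoef (S n) J k - mulX (fun i => fpcoef (S n) J i) k)
                             / INR (S n) = fpcoef n J k - fpcoef (S n) J k).
  { intros n. rewrite fpcoef_peel, <- fpcoef_sub. unfold fpcoef.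
    rewrite fact_simpl, mult_INR. field. apply not_0_INR. lia. }
  destruct k; cbn [mulX].
  - rewrite Rminus_0_r. apply rsum_ext. intros n _. rewrite <- Hterm. cbn [mulX]. field.
    apply not_0_INR. lia.
  - rewrite <- rsum_minus. apply rsum_ext. intros n _. rewrite <- Hterm. cbn [mulX]. field.
    apply not_0_INR. lia.
Qed.

(* The first term is the coefficient of [x^k] in [1/(J+1-x)^2]; the second vanishes as
   [N -> oo] (see [fpcoef_null]). *)
Lemma hsum_diff_eq N J k :
  hsum_diff N J k = INR (S k) / INR (S J) ^ S (S k) - divX (INR (S J)) (fun i => fpcoef N J i) k.
Proof.
  assert (HJ : INR (S J) <> 0) by (apply not_0_INR; lia).
  enough (Hw : forall k, INR (S k) / INR (S J) ^ S (S k) - hsum_diff N J k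
                         = divX (INR (S J)) (fun i => fpcoef N J i) k) by (rewrite <- Hw; ring).
  apply divX_unique; [exact HJ|]. intros i.
  pose proof (hsum_diff_rec N J i) as Hrec.
  unfold fpcoef at 1 in Hrec. rewrite pcoef_one in Hrec.
  change (INR (fact 0)) with 1 in Hrec. rewrite Rmult_1_l in Hrec.
  destruct i; cbn [mulX] in *.
  - rewrite Rminus_0_r in Hrec. rewrite Rmult_minus_distr_l, Hrec, Rplus_0_r.
    rewrite INR_1. field. exact HJ.
  - rewrite Rmult_minus_distr_l.
    replace (INR (S J) * hsum_diff N J (S i)) with
      (/ INR (S J) ^ S (S i) - fpcoef N J (S i) + hsum_diff N J i) by lra.
    rewrite (S_INR (S i)), <- (tech_pow_Rmult _ (S (S i))).
    field. split; [apply pow_nonzero|]; exact HJ.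
Qed.

Lemma hsum_diff_le N J k : hsum_diff N J k <= INR (S k) / INR (S J) ^ S (S k).
Proof.
  rewrite hsum_diff_eq.
  pose proof (divX_nonneg (INR (S J)) (fun i => fpcoef N J i) k ltac:(apply lt_0_INR; lia)
                (fun i => fpcoef_nonneg N J i)).
  lra.
Qed.

Lemma hsum_diff_ge N J k :
  INR (S k) / INR (S J) ^ S (S k) - rsum (S k) (fun i => fpcoef N J i) <= hsum_diff N J k.
Proof.
  rewrite hsum_diff_eq.
  assert (HJ : 1 <= INR (S J)) by (rewrite S_INR; pose proof (pos_INR J); lra).
  pose proof (divX_le_rsum (INR (S J)) (fun i => fpcoef N J i) k HJ (fun i => fpcoef_nonneg N J i)).
  pose proof (divX_nonneg (INR (S J)) (fun i => fpcoef N J i) k ltac:(lra)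
                (fun i => fpcoef_nonneg N J i)).
  nra.
Qed.

Lemma hsum_sub N J k : hsum N J k - hsum N (S J) k = hsum_diff N J k.
Proof.
  unfold hsum, hsum_diff. rewrite <- rsum_minus. apply rsum_ext. intros n _.
  rewrite <- fpcoef_sub. field. apply not_0_INR. lia.
Qed.

Lemma hsum_telescope N M k : hsum N 0 k = rsum M (fun J => hsum_diff N J k) + hsum N M k.
Proof.
  induction M as [|M IH]; simpl rsum; [ring|].
  rewrite IH, <- (hsum_sub N M k). ring.
Qed.

Lemma hsum_le_inv N M k :
  INR (S M) * hsum N M k <= rsum N (fun n => INR (fact n) * rsum (S k) (pcoef 0 n)).
Proof.
  unfold hsum. rewrite <- rsum_scal. apply rsum_le. intros n _.
  assert (Hn : 1 <= INR (S n)) by (rewrite S_INR; pose proof (pos_INR n); lra).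
  apply Rle_trans with (INR (S M) * fpcoef n M k).
  - apply Rmult_le_compat_l; [apply pos_INR|].
    pose proof (fpcoef_nonneg n M k).
    unfold Rdiv. rewrite <- (Rmult_1_r (fpcoef n M k)) at 2.
    apply Rmult_le_compat_l; [lra|]. rewrite <- Rinv_1. apply Rinv_le_contravar; lra.
  - unfold fpcoef. rewrite <- Rmult_assoc, (Rmult_comm (INR (S M))), Rmult_assoc.
    apply Rmult_le_compat_l; [apply pos_INR|apply pcoef_le_inv].
Qed.

Lemma hsum0_hharm N k : hsum N 0 k = rsum N (fun n => hharm (S n) k / INR (S n) ^ 2).
Proof.
  apply rsum_ext. intros n _. unfold fpcoef. rewrite hharm_pcoef, fact_simpl, mult_INR.
  field. apply not_0_INR. lia.
Qed.

Lemma fpcoef_le_hharm N J k : fpcoef N J k <= hharm (S N) k / INR (S N).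
Proof.
  rewrite hharm_pcoef, fact_simpl, mult_INR.
  replace (INR (S N) * INR (fact N) * pcoef 0 (S N) k / INR (S N))
    with (INR (fact N) * pcoef 0 (S N) k) by (field; apply not_0_INR; lia).
  apply Rmult_le_compat_l; [apply pos_INR|apply pcoef_le_pcoef0].
Qed.

Lemma cv_const c : Un_cv (fun _ => c) c.
Proof. intros eps He. exists O. intros. unfold Rdist. rewrite Rminus_diag, Rabs_R0. exact He. Qed.

Lemma cv_squeeze0 u v : (forall n, 0 <= u n <= v n) -> Un_cv v 0 -> Un_cv u 0.
Proof.
  intros H Hv eps He. destruct (Hv eps He) as [N HN]. exists N. intros n Hn.
  specialize (HN n Hn). specialize (H n). unfold Rdist in *. rewrite Rminus_0_r in *.
  rewrite Rabs_right in * by lra. lra.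
Qed.

Lemma cv_rsum0 M (f : nat -> nat -> R) :
  (forall J, (J < M)%nat -> Un_cv (fun N => f N J) 0) -> Un_cv (fun N => rsum M (f N)) 0.
Proof.
  induction M as [|M IH]; intros H; simpl rsum.
  - apply cv_const.
  - rewrite <- (Rplus_0_r 0). apply CV_plus; [apply IH; intros|]; apply H; lia.
Qed.

Lemma cv_growing_bounded u B : Un_growing u -> (forall n, u n <= B) -> exists l, Un_cv u l.
Proof.
  intros Hg Hb. destruct (growing_cv u Hg) as [l Hl].
  - exists B. intros x [n ->]. apply Hb.
  - exists l. exact Hl.
Qed.

Lemma cv_le_bound u l B : Un_cv u l -> (forall n, u n <= B) -> l <= B.
Proof. intros Hu Hb. exact (Rle_cv_lim Hb Hu (cv_const B)). Qed.

Lemma le_of_le_add_inv a b C : (forall M, a <= b + C / INR (S M)) -> a <= b.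
Proof.
  intros H. destruct (Rle_or_lt a b) as [|Hab]; [assumption|exfalso].
  destruct (INR_archimed (a - b) C) as [n Hn]; [lra|].
  specialize (H n). assert (Hn' : 0 < INR (S n)) by (apply lt_0_INR; lia).
  assert (C / INR (S n) < a - b).
  { apply (Rmult_lt_reg_r (INR (S n))); [exact Hn'|].
    unfold Rdiv. rewrite Rmult_assoc, Rinv_l, S_INR by lra. nra. }
  lra.
Qed.

Definition zeta_psum (s M : nat) : R := rsum M (fun J => / INR (S J) ^ s).

Lemma zeta_psum_growing s : Un_growing (zeta_psum s).
Proof.
  intros M. apply rsum_succ_le. left. apply Rinv_0_lt_compat, pow_lt, lt_0_INR. lia.
Qed.

Lemma zeta_psum_2_le n : zeta_psum 2 (S n) <= 2 - / INR (S n).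
Proof.
  induction n as [|n IH].
  - change (zeta_psum 2 1) with (0 + / INR 1 ^ 2). rewrite INR_1, pow1, Rinv_1. lra.
  - change (zeta_psum 2 (S (S n))) with (zeta_psum 2 (S n) + / INR (S (S n)) ^ 2).
    assert (Hx : 1 <= INR (S n)) by (rewrite S_INR; pose proof (pos_INR n); lra).
    rewrite (S_INR (S n)). set (x := INR (S n)) in *.
    (* [1/x - 1/(x+1) = 1/(x(x+1)) >= 1/(x+1)^2] *)
    assert (E : / x - / (x + 1) - / (x + 1) ^ 2 = / (x * (x + 1) ^ 2)) by (field; lra).
    assert (0 < / (x * (x + 1) ^ 2)).
    { apply Rinv_0_lt_compat, Rmult_lt_0_compat; [lra|apply pow_lt; lra]. }
    lra.
Qed.

Lemma zeta_psum_le s M : (2 <= s)%nat -> zeta_psum s M <= 2.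
Proof.
  intros Hs. apply Rle_trans with (zeta_psum 2 (S M)).
  - apply Rle_trans with (zeta_psum 2 M); [|apply zeta_psum_growing].
    apply rsum_le. intros J _.
    assert (Hx : 1 <= INR (S J)) by (rewrite S_INR; pose proof (pos_INR J); lra).
    apply Rinv_le_contravar; [apply pow_lt; lra|apply Rle_pow; [lra|exact Hs]].
  - pose proof (zeta_psum_2_le M). pose proof (Rinv_0_lt_compat (INR (S M))
      (lt_0_INR (S M) ltac:(lia))). lra.
Qed.

Lemma zeta_cv s : (2 <= s)%nat -> exists z, Un_cv (zeta_psum s) z.
Proof.
  intros Hs. apply (cv_growing_bounded _ 2); [apply zeta_psum_growing|].
  intros M. now apply zeta_psum_le.
Qed.

Lemma hharm_nonneg n k : 0 <= hharm n k.
Proof. rewrite hharm_pcoef. apply Rmult_le_pos; [apply pos_INR|apply pcoef_nonneg]. Qed.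

Lemma hharm_le_succ n k : hharm n k <= hharm (S n) k.
Proof.
  destruct k; [rewrite !hharm_0; lra|].
  rewrite hharm_succ. pose proof (hharm_nonneg (S n) k).
  assert (0 <= hharm (S n) k / INR (S n))
    by (apply Rle_mult_inv_pos; [assumption|apply lt_0_INR; lia]).
  lra.
Qed.

Lemma hsum0_growing k : Un_growing (fun N => hsum N 0 k).
Proof.
  intros N. rewrite !hsum0_hharm. apply rsum_succ_le.
  apply Rle_mult_inv_pos; [apply hharm_nonneg|apply pow_lt, lt_0_INR; lia].
Qed.

Lemma hsum0_le N k z :
  (forall M, zeta_psum (S (S k)) M <= z) -> hsum N 0 k <= INR (S k) * z.
Proof.
  intros Hz. set (C := rsum N (fun n => INR (fact n) * rsum (S k) (pcoef 0 n))).
  apply (le_of_le_add_inv _ _ C). intros M. rewrite (hsum_telescope N M k).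
  assert (rsum M (fun J => hsum_diff N J k) <= INR (S k) * zeta_psum (S (S k)) M).
  { unfold zeta_psum. rewrite <- rsum_scal. apply rsum_le. intros J _. apply hsum_diff_le. }
  assert (hsum N M k <= C / INR (S M)).
  { pose proof (hsum_le_inv N M k). assert (HM : 0 < INR (S M)) by (apply lt_0_INR; lia).
    apply (Rmult_le_reg_l (INR (S M))); [exact HM|].
    replace (INR (S M) * (C / INR (S M))) with C by (field; lra). assumption. }
  pose proof (Rmult_le_compat_l (INR (S k)) _ _ (pos_INR (S k)) (Hz M)). lra.
Qed.

Lemma hsum0_cv_exists k : exists l, Un_cv (fun N => hsum N 0 k) l.
Proof.
  destruct (zeta_cv (S (S k))) as [z Hz]; [lia|].
  apply (cv_growing_bounded _ (INR (S k) * z)); [apply hsum0_growing|].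
  intros N. apply hsum0_le. apply growing_ineq; [apply zeta_psum_growing|exact Hz].
Qed.

(* The block [n < m <= 2n] of the series already dominates [a(n)/(4n)]. *)
Lemma nondecr_div_null (a : nat -> R) l :
  (forall n, 0 <= a n) -> (forall n, a n <= a (S n)) ->
  Un_cv (fun N => rsum N (fun n => a n / INR (S n) ^ 2)) l -> Un_cv (fun n => a n / INR (S n)) 0.
Proof.
  intros Ha0 Hmono Hl. set (s := fun N => rsum N (fun n => a n / INR (S n) ^ 2)) in Hl.
  assert (Hs_growing : Un_growing s).
  { intros N. apply rsum_succ_le, Rle_mult_inv_pos; [apply Ha0|apply pow_lt, lt_0_INR; lia]. }
  assert (Hmono' : forall n d, a n <= a (n + d)%nat).
  { intros n d. induction d; [rewrite Nat.add_0_r; lra|].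
    rewrite Nat.add_succ_r. eapply Rle_trans; [exact IHd|apply Hmono]. }
  apply (cv_squeeze0 _ (fun n => 4 * (l - s (S n)))).
  - intros n. assert (Hx : 0 < INR (S n)) by (apply lt_0_INR; lia). split.
    { apply Rle_mult_inv_pos; [apply Ha0|exact Hx]. }
    assert (Hblock : INR (S n) * (a n / (2 * INR (S n)) ^ 2) <= s (S n + S n)%nat - s (S n)).
    { unfold s. rewrite rsum_add. ring_simplify. apply rsum_ge_const. intros j Hj.
      assert (Hy : 0 < INR (S (S n + j))) by (apply lt_0_INR; lia).
      assert (Hy2 : INR (S (S n + j)) <= 2 * INR (S n))
        by (replace (2 * INR (S n)) with (INR (S n + S n)) by (rewrite plus_INR; ring);
            apply le_INR; lia).
      unfold Rdiv. apply Rmult_le_compat; [apply Ha0| | |].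
      - left. apply Rinv_0_lt_compat, pow_lt. lra.
      - replace (S n + j)%nat with (n + S j)%nat by lia. apply Hmono'.
      - apply Rinv_le_contravar; [apply pow_lt; lra|apply pow_incr; lra]. }
    pose proof (growing_ineq s l Hs_growing Hl (S n + S n)).
    replace (INR (S n) * (a n / (2 * INR (S n)) ^ 2)) with (a n / INR (S n) / 4) in Hblock
      by (field; lra).
    lra.
  - replace 0 with (4 * (l - l)) by ring. apply CV_mult; [apply cv_const|].
    apply CV_minus; [apply cv_const|].
    apply (Un_cv_ext (fun n => s (n + 1)%nat)); [intros n; f_equal; lia|].
    now apply CV_shift'.
Qed.

Lemma hharm_div_null k : Un_cv (fun n => hharm (S n) k / INR (S n)) 0.
Proof.
  destruct (hsum0_cv_exists k) as [l Hl].
  apply (nondecr_div_null (fun n => hharm (S n) k) l).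
  - intros n. apply hharm_nonneg.
  - intros n. apply hharm_le_succ.
  - apply (Un_cv_ext (fun N => hsum N 0 k)); [intros N; apply hsum0_hharm|exact Hl].
Qed.

Lemma fpcoef_null J k : Un_cv (fun N => fpcoef N J k) 0.
Proof.
  apply (cv_squeeze0 _ _ (fun N => conj (fpcoef_nonneg N J k) (fpcoef_le_hharm N J k))).
  apply hharm_div_null.
Qed.

Lemma hsum0_ge N M k :
  INR (S k) * zeta_psum (S (S k)) M - rsum M (fun J => rsum (S k) (fun i => fpcoef N J i))
  <= hsum N 0 k.
Proof.
  rewrite (hsum_telescope N M k).
  assert (0 <= hsum N M k).
  { apply rsum_nonneg. intros n _. apply Rle_mult_inv_pos; [apply fpcoef_nonneg|].
    apply lt_0_INR. lia. }
  assert (INR (S k) * zeta_psum (S (S k)) M - rsum M (fun J => rsum (S k) (fun i => fpcoef N J i))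
          <= rsum M (fun J => hsum_diff N J k)).
  { unfold zeta_psum. rewrite <- rsum_scal, <- rsum_minus. apply rsum_le. intros J _.
    apply hsum_diff_ge. }
  lra.
Qed.

Lemma hsum0_cv k z :
  Un_cv (zeta_psum (S (S k))) z -> Un_cv (fun N => hsum N 0 k) (INR (S k) * z).
Proof.
  intros Hz. destruct (hsum0_cv_exists k) as [l Hl].
  assert (Hup : l <= INR (S k) * z).
  { apply (cv_le_bound _ _ _ Hl). intros N. apply hsum0_le.
    apply growing_ineq; [apply zeta_psum_growing|exact Hz]. }
  assert (Hlow : forall M, INR (S k) * zeta_psum (S (S k)) M <= l).
  { intros M. rewrite <- (Rminus_0_r (_ * _)).
    apply (Rle_cv_lim (fun N => hsum0_ge N M k)); [|exact Hl].
    apply CV_minus; [apply cv_const|].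
    apply cv_rsum0. intros J _. apply (cv_rsum0 (S k) (fun N i => fpcoef N J i)).
    intros i _. apply fpcoef_null. }
  assert (INR (S k) * z <= l).
  { apply (Rle_cv_lim Hlow); [|apply cv_const]. apply CV_mult; [apply cv_const|exact Hz]. }
  replace (INR (S k) * z) with l by lra. exact Hl.
Qed.

(* Summation by parts with [h_(k+1)(n) = h_(k+1)(n-1) + h_k(n)/n]. *)
Lemma hharm_series_shift k N :
  sum_f_R0 (fun i => hharm (S i) (S k) / (INR (S i) + 1) ^ 2) N
  + sum_f_R0 (fun i => hharm (S i) k / INR (S i) ^ 3) N
  = hsum (S (S N)) 0 (S k) - hharm (S (S N)) k / INR (S (S N)) ^ 3.
Proof.
  rewrite hsum0_hharm. induction N as [|N IH].
  - assert (Hone : forall j, hharm 1 j = 1).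
    { induction j as [|j IHj]; [reflexivity|]. rewrite hharm_succ, IHj. simpl. field. }
    simpl sum_f_R0. change (rsum 2 ?f) with (0 + f O + f 1%nat). cbv beta.
    rewrite (hharm_succ 1 k), !Hone. simpl INR. field.
  - change (sum_f_R0 ?f (S N)) with (sum_f_R0 f N + f (S N)).
    change (rsum (S (S (S N))) ?f) with (rsum (S (S N)) f + f (S (S N))). cbv beta.
    replace (INR (S (S N)) + 1) with (INR (S (S (S N)))) by (rewrite (S_INR (S (S N))); ring).
    assert (Hy : INR (S (S (S N))) <> 0) by (apply not_0_INR; lia).
    rewrite (hharm_succ (S (S N)) k).
    replace ((hharm (S (S N)) (S k) + hharm (S (S (S N))) k / INR (S (S (S N))))
               / INR (S (S (S N))) ^ 2)
      with (hharm (S (S N)) (S k) / INR (S (S (S N))) ^ 2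
            + hharm (S (S (S N))) k / INR (S (S (S N))) ^ 3) by (field; exact Hy).
    lra.
Qed.

Lemma nonneg_series_sum_cv (a b : nat -> R) L :
  (forall i, 0 <= a i) -> (forall i, 0 <= b i) ->
  Un_cv (fun N => sum_f_R0 a N + sum_f_R0 b N) L ->
  exists l1 l2, Un_cv (sum_f_R0 a) l1 /\ Un_cv (sum_f_R0 b) l2 /\ l1 + l2 = L.
Proof.
  intros Ha Hb HL.
  assert (Hle : forall N, sum_f_R0 a N + sum_f_R0 b N <= L).
  { apply growing_ineq; [|exact HL]. intros N. simpl.
    pose proof (Ha (S N)). pose proof (Hb (S N)). lra. }
  destruct (cv_growing_bounded (sum_f_R0 a) L) as [l1 H1].
  { intros N. simpl. pose proof (Ha (S N)). lra. }
  { intros N. pose proof (Hle N). pose proof (cond_pos_sum b N Hb). lra. }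
  destruct (cv_growing_bounded (sum_f_R0 b) L) as [l2 H2].
  { intros N. simpl. pose proof (Hb (S N)). lra. }
  { intros N. pose proof (Hle N). pose proof (cond_pos_sum a N Ha). lra. }
  exists l1, l2. repeat split; [exact H1|exact H2|].
  exact (UL_sequence _ _ _ (CV_plus _ _ _ _ H1 H2) HL).
Qed.

Lemma hharm_boundary_null k : Un_cv (fun N => hharm (S (S N)) k / INR (S (S N)) ^ 3) 0.
Proof.
  apply (cv_squeeze0 _ (fun N => hharm (S (S N)) k / INR (S (S N)))).
  - intros N. assert (Hx : 1 <= INR (S (S N))) by (rewrite S_INR; pose proof (pos_INR (S N)); lra).
    split; [apply Rle_mult_inv_pos; [apply hharm_nonneg|apply pow_lt; lra]|].
    unfold Rdiv. apply Rmult_le_compat_l; [apply hharm_nonneg|].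
    apply Rinv_le_contravar; [lra|]. rewrite <- (pow_1 (INR (S (S N)))) at 1.
    apply Rle_pow; [lra|lia].
  - apply (Un_cv_ext (fun N => hharm (S (N + 1)) k / INR (S (N + 1)))).
    + intros N. now rewrite Nat.add_1_r.
    + apply (CV_shift' (fun n => hharm (S n) k / INR (S n))), hharm_div_null.
Qed.

Lemma hharm_series_identity k z : Un_cv (zeta_psum (S (S (S k)))) z ->
  exists l1 l2,
    Un_cv (sum_f_R0 (fun i => hharm (S i) (S k) / (INR (S i) + 1) ^ 2)) l1 /\
    Un_cv (sum_f_R0 (fun i => hharm (S i) k / INR (S i) ^ 3)) l2 /\
    l1 + l2 = INR (S (S k)) * z.
Proof.
  intros Hz. rewrite <- (Rminus_0_r (_ * z)).
  apply nonneg_series_sum_cv.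
  - intros i. apply Rle_mult_inv_pos; [apply hharm_nonneg|].
    apply pow_lt. rewrite <- S_INR. apply lt_0_INR. lia.
  - intros i. apply Rle_mult_inv_pos; [apply hharm_nonneg|apply pow_lt, lt_0_INR; lia].
  - apply (Un_cv_ext (fun N => hsum (N + 2) 0 (S k) - hharm (S (S N)) k / INR (S (S N)) ^ 3)).
    + intros N. rewrite hharm_series_shift, Nat.add_comm. reflexivity.
    + apply CV_minus; [|apply hharm_boundary_null].
      apply (CV_shift' (fun N => hsum N 0 (S k))), hsum0_cv, Hz.
Qed.

Theorem mainTheorem17 (k : nat) (hk : (1 <= k)%nat) :
  exists l1 l2 z : R,
    Un_cv (fun N => sum_f_R0 (fun i =>
             Q (S k) (fun r => Hr (S i) r) / (INR (S i) + 1) ^ 2) N) l1 /\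
    Un_cv (fun N => sum_f_R0 (fun i =>
             Q k (fun r => Hr (S i) r) / INR (S i) ^ 3) N) l2 /\
    Un_cv (fun N => sum_f_R0 (fun i => / INR (S i) ^ (k + 3)) N) z /\
    l1 + l2 = (INR k + 2) * z.
Proof.
  (* The identity holds for [k = 0] as well. *)
  destruct (zeta_cv (S (S (S k)))) as [z Hz]; [lia|].
  destruct (hharm_series_identity k z Hz) as (l1 & l2 & H1 & H2 & Hl).
  exists l1, l2, z. split; [|split; [|split]].
  - refine (Un_cv_ext _ _ (fun N => sum_eq _ _ N (fun i _ => _)) _ H1).
    now rewrite Q_hharm.
  - refine (Un_cv_ext _ _ (fun N => sum_eq _ _ N (fun i _ => _)) _ H2).
    now rewrite Q_hharm.
  - apply (Un_cv_ext (fun N => zeta_psum (S (S (S k))) (N + 1))).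
    + intros N. rewrite sum_f_R0_rsum, Nat.add_1_r, Nat.add_comm. reflexivity.
    + apply (CV_shift' (zeta_psum (S (S (S k))))), Hz.
  - rewrite Hl, !S_INR. ring.
Qed.
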